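(* Let $N=\{1,\ldots,n\}$ be a finite player set and let $\Gamma=(A,u)$ be a normal form game on $N$, where each $A_i\subseteq\mathbb{R}^{k_i}$ is compact, $A=A_1\times\cdots\times A_n$, and each $u_i\colon A\to\mathbb{R}$ is continuous. Suppose $\Gamma$ is separable, i.e. there are functions $h^i_j\colon A_j\to\mathbb{R}$ ($i,j\in N$) with $u_i(a)=\sum_{j\in N}h^i_j(a_j)$ for all $a\in A$ and $i\in N$, and let $B_j=\arg\max_{b_j\in A_j}h^j_j(b_j)\subseteq A_j$ be player $j$'s (constant) set of best responses. Suppose $\Gamma$ admits a socially optimal Nash equilibrium, i.e. a Nash equilibrium $a^\star\in A$ with $\sum_{i\in N}u_i(a^\star)=\bar v^\lambda(N)=\max_{a\in A}\sum_{i\in N}u_i(a)$. If for all coalitions $S\subseteq N$ and all players $j\in N$ $$\max_{a_j\in A_j}\sum_{i\in S}h^i_j(a_j)=\sum_{i\in S}\max_{a_j\in A_j}h^i_j(a_j)\quad\text{and}\quad \max_{a_j\in B_j}\sum_{i\in S}h^i_j(a_j)=\sum_{i\in S}\max_{a_j\in B_j}h^i_j(a_j),$$ then the generalised $\lambda$-Core of $\Gamma$ is non-empty: $\widehat{\mathcal{C}}^\lambda(\Gamma)\neq\varnothing$.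
   Context: Notation: for $S\subseteq N$, $A_S=\prod_{i\in S}A_i$, $A_{-S}=A_{N\setminus S}$, and a profile is written $a=(a_S,a_{-S})$. A Nash equilibrium is $a^*\in A$ with $u_i(a^* )\ge u_i(b_i,a^*_{-i})$ for all $i$ and $b_i\in A_i$. For a nonempty coalition $S\subsetneq N$ and a coalitional strategy $a_S\in A_S$, the reduced game has player set $N\setminus S$, strategy set $A_{-S}$, and payoffs $b_{-S}\mapsto u_j(a_S,b_{-S})$ for $j\in N\setminus S$; let $\mathsf{E}(S,a_S)\subseteq A_{-S}$ be its set of Nash equilibria. The generalised $\lambda$-characteristic function is $\bar v^\lambda(\varnothing)=0$, $\bar v^\lambda(N)=\max_{a\in A}\sum_{i\in N}u_i(a)$, and for $\varnothing\neq S\subsetneq N$, $$\bar v^\lambda(S)=\max_{a_S\in A_S}\ \max_{b_{-S}\in\mathsf{E}(S,a_S)}\sum_{i\in S}u_i(a_S,b_{-S}),$$ with value $-\infty$ when the relevant equilibrium set is empty. For a characteristic function $v$, its Core is $\mathcal{C}(v)=\{x\in\mathbb{R}^N:\sum_{i\in N}x_i=v(N),\ \sum_{i\in S}x_i\ge v(S)\text{ for all }S\subseteq N\}$. The generalised $\lambda$-Core of $\Gamma$ is $\widehat{\mathcal{C}}^\lambda(\Gamma)=\{a\in A: (u_1(a),\ldots,u_n(a))\in\mathcal{C}(\bar v^\lambda)\}$. *)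

From HB Require Import structures.
From mathcomp Require Import all_boot all_order all_algebra.
From mathcomp Require Import all_classical all_reals all_analysis.
Unset Printing Implicit Defensive.
Import Order.TTheory GRing.Theory Num.Theory.
Import numFieldNormedType.Exports.
Local Open Scope classical_set_scope.
Local Open Scope ring_scope.

Section Game.
Variables (R : realType) (n : nat) (k : 'I_n -> nat).

Definition profile := prod_topology (fun i : 'I_n => 'rV[R]_(k i)).

Definition pcoord (a : profile) (i : 'I_n) : 'rV[R]_(k i) :=
  (a : forall j, 'rV[R]_(k j)) i.

Variable A : forall i : 'I_n, set 'rV[R]_(k i).
Variable u : 'I_n -> profile -> R.

Definition in_A (a : profile) : Prop := forall i, A i (pcoord a i).

Definition deviate (a : profile) (i : 'I_n) (b : 'rV[R]_(k i)) : profile :=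
  dfwith (a : forall j, 'rV[R]_(k j)) i b.

Definition nash_eq (a : profile) : Prop :=
  in_A a /\ forall i (b : 'rV[R]_(k i)), A i b -> u i (deviate a i b) <= u i a.

Definition mix (S : {set 'I_n}) (a b : profile) : profile :=
  fun i => if i \in S then pcoord a i else pcoord b i.

Definition in_A_on (S : {set 'I_n}) (a : profile) : Prop :=
  forall i, i \in S -> A i (pcoord a i).

(* E(S, a_S): Nash equilibria b_{-S} of the reduced game with player set N \ S,
   strategy set A_{-S}, payoffs b_{-S} |-> u_j(a_S, b_{-S}).  Represented as full
   profiles b whose coordinates in S are irrelevant. *)
Definition reduced_eq (S : {set 'I_n}) (a b : profile) : Prop :=
  in_A_on (~: S) b /\
  forall j, j \notin S -> forall c : 'rV[R]_(k j), A j c ->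
    u j (mix S a (deviate b j c)) <= u j (mix S a b).

(* generalised lambda-characteristic function; "max" is rendered as the
   supremum in the extended reals (= -oo on the empty set, = max when attained) *)
Definition vbar (S : {set 'I_n}) : \bar R :=
  if S == finset.set0 then 0%E
  else if S == finset.setT then
    ereal_sup [set (\sum_(i < n) u i a)%:E | a in in_A]
  else
    ereal_sup [set x | exists a b, in_A_on S a /\ reduced_eq S a b /\
                         x = (\sum_(i in S) u i (mix S a b))%:E].

Definition core (v : {set 'I_n} -> \bar R) : set ('I_n -> R) :=
  [set x | (\sum_(i < n) x i)%:E = v finset.setT /\
           forall S : {set 'I_n}, (v S <= (\sum_(i in S) x i)%:E)%E].

Definition gen_lambda_core : set profile :=
  [set a | in_A a /\ core vbar (fun i => u i a)].

End Game.

Arguments pcoord {R n k} a i.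
Arguments in_A {R n k} A a.
Arguments deviate {R n k} a i b.
Arguments nash_eq {R n k} A u a.
Arguments mix {R n k} S a b.
Arguments in_A_on {R n k} A S a.
Arguments reduced_eq {R n k} A u S a b.
Arguments vbar {R n k} A u S.
Arguments core {R n} v x.
Arguments gen_lambda_core {R n k} A u _.

Definition emax (R : realType) (T : Type) (X : set T) (f : T -> R) : \bar R :=
  ereal_sup [set (f x)%:E | x in X].
Arguments emax {R T} X f.

From HB Require Import structures.
From mathcomp Require Import all_boot all_order all_algebra.
From mathcomp Require Import all_classical all_reals all_analysis.
Import Order.TTheory GRing.Theory Num.Theory.
Import numFieldNormedType.Exports.
Local Open Scope classical_set_scope.
Local Open Scope ring_scope.

(* The social optimum a* maximises sum_i h^i_j over A_j in each coordinate j
   (deviate in coordinate j only); additivity of max over the grand coalition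
   then forces a*_j to maximise every single h^i_j, so a* maximises every
   payoff u_i on A at once.  A profile that is simultaneously best for all
   players dominates whatever any coalition S can secure, whatever the reduced
   equilibrium, hence lies in the generalised lambda-Core. *)

Lemma big_in_setT (T : Type) (idx : T) (op : T -> T -> T) (I : finType)
    (F : I -> T) :
  \big[op/idx]_(i in [set: I]%SET) F i = \big[op/idx]_i F i.
Proof. by apply: eq_bigl => i; rewrite finset.in_setT. Qed.

Lemma lee_fin_of_sum_eq (R : realType) (I : finType) (e : I -> \bar R) (r : I -> R) :
  (forall i, (r i)%:E <= e i)%E -> (\sum_i e i = (\sum_i r i)%:E)%E ->
  forall i, (e i <= (r i)%:E)%E.
Proof.
move=> r_le_e sum_eq i0; move: sum_eq.
rewrite (bigD1 i0) //= [X in _ = X%:E](bigD1 i0) //= EFinD => sum_eq.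
have rest_le : ((\sum_(i | i != i0) r i)%:E <= \sum_(i | i != i0) e i)%E.
  by rewrite -sumEFin; apply: lee_sum => i _; exact: r_le_e.
rewrite -(leeD2rE _ _ (x := (\sum_(i | i != i0) r i)%:E)) // -sum_eq.
exact: leeD2l.
Qed.

Lemma emax_ge {R : realType} {T : Type} {X : set T} (f : T -> R) x :
  X x -> ((f x)%:E <= emax X f)%E.
Proof. by move=> Xx; apply: ereal_sup_ubound; exists x. Qed.

Lemma emax_attained {R : realType} {T : Type} {X : set T} (f : T -> R) x0 :
  X x0 -> (forall x, X x -> f x <= f x0) -> emax X f = (f x0)%:E.
Proof.
move=> Xx0 f_le; apply/eqP; rewrite eq_le emax_ge // andbT.
by apply: ge_ereal_sup => _ [x Xx <-]; rewrite lee_fin f_le.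
Qed.

Section Game.
Variables (R : realType) (n : nat) (k : 'I_n -> nat).
Variable A : forall i : 'I_n, set 'rV[R]_(k i).
Implicit Types (a b : profile R n k) (S : {set 'I_n}).

Lemma pcoord_deviate a i (c : 'rV[R]_(k i)) : pcoord (deviate a i c) i = c.
Proof. exact: dfwithin. Qed.

Lemma pcoord_deviate_ne a i (c : 'rV[R]_(k i)) j :
  j != i -> pcoord (deviate a i c) j = pcoord a j.
Proof. by rewrite eq_sym; exact: dfwithout. Qed.

Lemma in_A_deviate a i (c : 'rV[R]_(k i)) :
  in_A A a -> A i c -> in_A A (deviate a i c).
Proof.
move=> Aa Ac j; case: (eqVneq j i) => [->|ji]; first by rewrite pcoord_deviate.
by rewrite pcoord_deviate_ne.
Qed.

Lemma in_A_mix S a b : in_A_on A S a -> in_A_on A (~: S) b -> in_A A (mix S a b).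
Proof.
move=> Aa Ab j; rewrite /pcoord /mix; case: ifP => jS; first exact: Aa.
by apply: Ab; rewrite finset.in_setC jS.
Qed.

Variable u : 'I_n -> profile R n k -> R.

Lemma vbar_setT_attained a :
  in_A A a -> (forall b, in_A A b -> \sum_i u i b <= \sum_i u i a) ->
  vbar A u [set: 'I_n]%SET = (\sum_i u i a)%:E.
Proof.
move=> Aa a_opt; rewrite /vbar eqxx.
case: ifP => [/eqP T0|_]; first by rewrite -big_in_setT T0 big_set0.
by apply: emax_attained.
Qed.

Lemma vbar_setT_ge a : in_A A a -> ((\sum_i u i a)%:E <= vbar A u [set: 'I_n]%SET)%E.
Proof.
move=> Aa; rewrite /vbar eqxx.
case: ifP => [/eqP T0|_]; first by rewrite -big_in_setT T0 big_set0.
exact: emax_ge.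
Qed.

Lemma vbar_le_of_max_payoffs a :
  in_A A a -> (forall i b, in_A A b -> u i b <= u i a) ->
  forall S, (vbar A u S <= (\sum_(i in S) u i a)%:E)%E.
Proof.
move=> Aa a_max S.
have sum_le S' b : in_A A b -> \sum_(i in S') u i b <= \sum_(i in S') u i a.
  by move=> Ab; apply: ler_sum => i _; exact: a_max.
rewrite /vbar; case: ifP => [/eqP->|_]; first by rewrite big_set0.
case: ifP => [/eqP->|_].
  by apply: ge_ereal_sup => _ [b Ab <-]; rewrite lee_fin -big_in_setT sum_le.
apply: ge_ereal_sup => _ [a' [b [Aa' [[Ab _] ->]]]].
by rewrite lee_fin sum_le //; exact: in_A_mix.
Qed.

Lemma max_payoffs_in_gen_lambda_core a :
  in_A A a -> (forall i b, in_A A b -> u i b <= u i a) -> gen_lambda_core A u a.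
Proof.
move=> Aa a_max; split=> //; split; last exact: vbar_le_of_max_payoffs.
rewrite (@vbar_setT_attained a Aa) // => b Ab.
by apply: ler_sum => i _; exact: a_max.
Qed.

Variable h : forall i j : 'I_n, 'rV[R]_(k j) -> R.
Hypothesis u_sep : forall a, in_A A a -> forall i, u i a = \sum_j h i j (pcoord a j).

Lemma sum_u_separable a :
  in_A A a -> \sum_i u i a = \sum_j \sum_i h i j (pcoord a j).
Proof.
move=> Aa; rewrite (eq_bigr _ (fun i _ => u_sep _ Aa i)).
exact: (exchange_big _ _ _ _ _ (fun i j => h i j (pcoord a j))).
Qed.

Variable astar : profile R n k.
Hypothesis A_astar : in_A A astar.
Hypothesis astar_opt : (\sum_i u i astar)%:E = vbar A u [set: 'I_n]%SET.

Lemma sum_h_le_social_opt j c :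
  A j c -> \sum_i h i j c <= \sum_i h i j (pcoord astar j).
Proof.
move=> Ac; have Adev : in_A A (deviate astar j c) by exact: in_A_deviate.
have := vbar_setT_ge _ Adev; rewrite -astar_opt lee_fin !sum_u_separable //.
rewrite (bigD1 j) //= [leRHS](bigD1 j) //= pcoord_deviate.
under [X in _ + X <= _]eq_bigr => l lj do rewrite pcoord_deviate_ne //.
by rewrite lerD2r.
Qed.

Hypothesis emax_additive : forall j,
  emax (A j) (fun c => \sum_(i in [set: 'I_n]%SET) h i j c)
    = (\sum_(i in [set: 'I_n]%SET) emax (A j) (h i j))%E.

Lemma h_le_social_opt i j c : A j c -> h i j c <= h i j (pcoord astar j).
Proof.
move=> Ac; rewrite -lee_fin; apply: le_trans (emax_ge _ _ Ac) _.
apply: (@lee_fin_of_sum_eq _ _ (fun i => emax (A j) (h i j))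
                         (fun i => h i j (pcoord astar j))) => [i'|].
  exact: emax_ge.
rewrite -big_in_setT -emax_additive.
under eq_fun => c' do rewrite big_in_setT.
exact: emax_attained _ _ (A_astar j) (@sum_h_le_social_opt j).
Qed.

Lemma u_le_social_opt i b : in_A A b -> u i b <= u i astar.
Proof.
move=> Ab; rewrite !u_sep //; apply: ler_sum => j _.
exact: h_le_social_opt.
Qed.

End Game.

Theorem theorem1 (R : realType) (n : nat) (k : 'I_n -> nat)
    (A : forall i : 'I_n, set 'rV[R]_(k i)) (u : 'I_n -> profile R n k -> R)
    (h : forall (i j : 'I_n), 'rV[R]_(k j) -> R) :
  (forall i, compact (A i)) ->
  (forall i, {within in_A A, continuous (u i)}) ->
  (* separability *)
  (forall a, in_A A a -> forall i, u i a = \sum_(j < n) h i j (pcoord a j)) ->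
  (* B_j = argmax_{b_j in A_j} h^j_j(b_j) *)
  let B := fun j : 'I_n =>
    [set b : 'rV[R]_(k j) | A j b /\ forall c, A j c -> h j j c <= h j j b] in
  (* existence of a socially optimal Nash equilibrium *)
  (exists astar, nash_eq A u astar /\
     (\sum_(i < n) u i astar)%:E = vbar A u finset.setT) ->
  (forall (S : {set 'I_n}) (j : 'I_n),
     emax (A j) (fun aj => \sum_(i in S) h i j aj)
       = (\sum_(i in S) emax (A j) (h i j))%E /\
     emax (B j) (fun aj => \sum_(i in S) h i j aj)
       = (\sum_(i in S) emax (B j) (h i j))%E) ->
  gen_lambda_core A u !=set0.
Proof.
move=> _ _ u_sep B [astar [[A_astar _] astar_opt]] emax_additive.
exists astar; apply: max_payoffs_in_gen_lambda_core => // i b Ab.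
have emax_additive_N j := proj1 (emax_additive [set: 'I_n]%SET j).
exact: (@u_le_social_opt _ _ _ A u h u_sep astar A_astar astar_opt
          emax_additive_N i b Ab).
Qed.
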